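(* Let $p < q < r$ be primes such that $\{p, q, r\}$ is a symmetric triple. Then $q \leq \frac{3p-1}{2}$, and either $r = 2p-1$ or $q < r \leq \frac{3p-1}{2}$.
   Context: Two distinct primes $p$ and $q$ form a symmetric pair if $\gcd(p-1, q-1) = |p-q|$. A symmetric triple is a set of three primes such that any two of them form a symmetric pair. *)

From mathcomp Require Import all_boot.

Definition natdist (p q : nat) : nat := maxn p q - minn p q.

Definition symmetric_pair (p q : nat) : Prop :=
  [/\ prime p, prime q, p <> q & gcdn p.-1 q.-1 = natdist p q].

Definition symmetric_triple (p q r : nat) : Prop :=
  [/\ symmetric_pair p q, symmetric_pair p r & symmetric_pair q r].

From mathcomp Require Import all_boot.
From mathcomp Require Import zify.

(* For p < q in a symmetric pair, q - p = gcd(p - 1, q - 1) divides p - 1,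
   and a divisor of p - 1 is either p - 1 itself or at most (p - 1)/2.
   Since q - p < r - p <= p - 1, the first case is excluded for q, giving
   2q <= 3p - 1; for r the two cases give r = 2p - 1 or 2r <= 3p - 1. *)

Lemma natdistEr (p q : nat) : p <= q -> natdist p q = q - p.
Proof.
by move=> le_pq; rewrite /natdist (maxn_idPr le_pq) (minn_idPl le_pq).
Qed.

Lemma symmetric_pair_dvd_pred (p q : nat) :
  p < q -> symmetric_pair p q -> (q - p) %| p.-1.
Proof.
by move=> /ltnW le_pq [_ _ _ gcd_dist]; rewrite -natdistEr // -gcd_dist
  dvdn_gcdl.
Qed.

Lemma proper_dvdn_double_leq (d n : nat) :
  0 < n -> d %| n -> d < n -> 2 * d <= n.
Proof. by move=> n_gt0 /dvdnP [[|[|k]] ->] /=; nia. Qed.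

(* q <= (3p-1)/2 is stated as 2*q <= 3*p - 1 (exact since p >= 2). *)
Theorem corollary1 (p q r : nat) :
  prime p -> prime q -> prime r -> p < q -> q < r ->
  symmetric_triple p q r ->
  2 * q <= 3 * p - 1 /\ (r = 2 * p - 1 \/ (q < r /\ 2 * r <= 3 * p - 1)).
Proof.
move=> p_pr _ _ lt_pq lt_qr [sym_pq sym_pr _].
have lt_pr := ltn_trans lt_pq lt_qr.
have pred_p_gt0 : 0 < p.-1 by have := prime_gt1 p_pr; lia.
have dvd_q : (q - p) %| p.-1 by exact: symmetric_pair_dvd_pred.
have dvd_r : (r - p) %| p.-1 by exact: symmetric_pair_dvd_pred.
have le_rp : r - p <= p.-1 by exact: dvdn_leq.
have le_q : 2 * (q - p) <= p.-1.
  by apply: proper_dvdn_double_leq => //; lia.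
split; first lia.
have [eq_r | ne_r] := eqVneq (r - p) p.-1; first by left; lia.
have le_r : 2 * (r - p) <= p.-1.
  by apply: proper_dvdn_double_leq => //; lia.
by right; split => //; lia.
Qed.
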